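(* Let $Y$ be a space and $\mathcal X=(X_i)_{i\in I_Y}$ a family of nonempty spaces. The zoom space $Z(Y,\mathcal X)$ is compact (resp. $\sigma$-compact, resp. $\mathcal K$-analytic) if and only if $Y$ and every $X_i$, $i\in I_Y$, are compact (resp. $\sigma$-compact, resp. $\mathcal K$-analytic).
   Context: All spaces are Tychonoff. For a space $Y$, $I_Y$ is its set of isolated points and $Y'=Y\setminus I_Y$. The zoom space $Z(Y,\mathcal X)$ is the disjoint union $Y'\cup\bigcup_{i\in I_Y}X_i$ with the topology whose basis consists of all open subsets of the $X_i$ and all sets $V_U=(U\setminus I_Y)\cup\bigcup\{X_i:i\in U\cap I_Y\}$ with $U$ open in $Y$. A space is $\mathcal K$-analytic if it is of the form $\bigcup_{\sigma\in\omega^\omega}\bigcap_{k\in\omega}F_{\sigma(0),\dots,\sigma(k)}$ for closed subsets $F_{n_0,\dots,n_k}$ of some compact space. *)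

From Stdlib Require Import Reals List Eqdep.
Import ListNotations.
Open Scope R_scope.

Record space := Space {
  pt :> Type;
  op : (pt -> Prop) -> Prop;
  op_full : op (fun _ => True);
  op_inter : forall U V, op U -> op V -> op (fun x => U x /\ V x);
  op_union : forall F : (pt -> Prop) -> Prop,
      (forall U, F U -> op U) -> op (fun x => exists U, F U /\ U x)
}.

Definition closed (X : space) (C : X -> Prop) : Prop := op X (fun x => ~ C x).

Definition continuous (X Y : space) (f : X -> Y) : Prop :=
  forall V, op Y V -> op X (fun x => V (f x)).

(* continuity into the real line (open intervals form a base) *)
Definition continuous_R (X : space) (f : X -> R) : Prop :=
  forall a b, op X (fun x => a < f x < b).

Definition tychonoff (X : space) : Prop :=
  (forall x : X, closed X (fun z => z = x)) /\
  (forall (C : X -> Prop) (x : X), closed X C -> ~ C x ->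
     exists f : X -> R, continuous_R X f /\ f x = 0 /\
       (forall z, C z -> f z = 1) /\ (forall z, 0 <= f z <= 1)).

Definition compact_set (X : space) (A : X -> Prop) : Prop :=
  forall F : (X -> Prop) -> Prop,
    (forall U, F U -> op X U) ->
    (forall x, A x -> exists U, F U /\ U x) ->
    exists l : list (X -> Prop),
      (forall U, In U l -> F U) /\ (forall x, A x -> exists U, In U l /\ U x).

Definition compact_space (X : space) : Prop := compact_set X (fun _ => True).

Definition sigma_compact (X : space) : Prop :=
  exists K : nat -> X -> Prop,
    (forall n, compact_set X (K n)) /\ (forall x, exists n, K n x).

Definition embedding (X Y : space) (e : X -> Y) : Prop :=
  (forall x y, e x = e y -> x = y) /\ continuous X Y e /\
  (forall U, op X U -> exists V, op Y V /\ forall x, U x <-> V (e x)).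

Definition K_analytic (X : space) : Prop :=
  exists (K : space) (e : X -> K) (F : list nat -> K -> Prop),
    tychonoff K /\ compact_space K /\ embedding X K e /\
    (forall s, closed K (F s)) /\
    (forall z : K, (exists x, e x = z) <->
       exists sigma : nat -> nat, forall k : nat, F (map sigma (seq 0 (S k))) z).

Definition isolated (Y : space) (y : Y) : Prop := op Y (fun z => z = y).
Definition Iso (Y : space) : Type := {y : Y | isolated Y y}.
Definition NIso (Y : space) : Type := {y : Y | ~ isolated Y y}.

(* Zoom space Z(Y, X) : carrier Y' ⊔ ⨆_{i ∈ I_Y} X_i *)
Definition zcar (Y : space) (X : Iso Y -> space) : Type :=
  (NIso Y + {i : Iso Y & pt (X i)})%type.

(* basic set V_U = (U \ I_Y) ∪ ⋃{X_i : i ∈ U ∩ I_Y} *)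
Definition VU (Y : space) (X : Iso Y -> space) (U : Y -> Prop) : zcar Y X -> Prop :=
  fun p => match p with
           | inl y => U (proj1_sig y)
           | inr s => U (proj1_sig (projT1 s))
           end.

Definition WB (Y : space) (X : Iso Y -> space) (i : Iso Y) (W : X i -> Prop)
  : zcar Y X -> Prop :=
  fun p => exists x, W x /\ p = inr (existT (fun j => pt (X j)) i x).

Definition zopen (Y : space) (X : Iso Y -> space) (O : zcar Y X -> Prop) : Prop :=
  forall p, O p ->
    (exists U, op Y U /\ VU Y X U p /\ (forall q, VU Y X U q -> O q)) \/
    (exists i W, op (X i) W /\ WB Y X i W p /\ (forall q, WB Y X i W q -> O q)).

Lemma zopen_full Y X : zopen Y X (fun _ => True).
Proof.
  intros p _. left. exists (fun _ => True). split; [apply op_full|].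
  split; [destruct p; exact I | intros; exact I].
Qed.

Lemma zopen_union Y X (F : (zcar Y X -> Prop) -> Prop) :
  (forall U, F U -> zopen Y X U) -> zopen Y X (fun x => exists U, F U /\ U x).
Proof.
  intros HF p [O [FO Op]].
  destruct (HF O FO p Op) as [[U [HU [Hp Hs]]] | [i [W [HW [Hp Hs]]]]].
  - left. exists U. repeat split; auto. intros q Hq. exists O; auto.
  - right. exists i, W. repeat split; auto. intros q Hq. exists O; auto.
Qed.

Lemma zopen_inter Y X (O1 O2 : zcar Y X -> Prop) :
  zopen Y X O1 -> zopen Y X O2 -> zopen Y X (fun x => O1 x /\ O2 x).
Proof.
  intros H1 H2 p [P1 P2].
  destruct (H1 p P1) as [[U [HU [Hp Hs]]] | [i [W [HW [Hp Hs]]]]],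
    (H2 p P2) as [[U' [HU' [Hp' Hs']]] | [i' [W' [HW' [Hp' Hs']]]]].
  - left. exists (fun y => U y /\ U' y). split; [apply op_inter; auto|].
    split; [destruct p; simpl in *; auto|].
    intros q Hq; split; [apply Hs|apply Hs']; destruct q; simpl in *; tauto.
  - right. exists i', W'. split; auto. split; auto.
    intros q Hq. split; auto. apply Hs.
    destruct Hp' as [x [_ ->]]. destruct Hq as [z [_ ->]]. simpl in *. exact Hp.
  - right. exists i, W. split; auto. split; auto.
    intros q Hq. split; auto. apply Hs'.
    destruct Hp as [x [_ ->]]. destruct Hq as [z [_ ->]]. simpl in *. exact Hp'.
  - destruct Hp as [x [Wx ->]]. destruct Hp' as [x' [Wx' E]].
    inversion E as [E']. subst i'.
    injection E as E. apply inj_pair2 in E. subst x'.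
    right. exists i, (fun z => W z /\ W' z). split; [apply op_inter; auto|].
    split; [exists x; auto|].
    intros q [z [[Wz Wz'] ->]]. split; [apply Hs | apply Hs']; exists z; auto.
Qed.

Definition zoom (Y : space) (X : Iso Y -> space) : space :=
  Space (zcar Y X) (zopen Y X) (zopen_full Y X) (zopen_inter Y X) (zopen_union Y X).

From Stdlib Require Import Reals List Classical ClassicalEpsilon FunctionalExtensionality
  PropExtensionality ProofIrrelevance Eqdep Cantor.
Import ListNotations.

(* Y embeds in Z(Y, X) as a closed subspace (an isolated point i goes to a chosen point of
   X_i), and so does every X_i; compactness, sigma-compactness and K-analyticity pass to
   closed subspaces.  Conversely, over a compact C of Y finitely many basic sets V_U suffice,
   except above an isolated point i of C, whose neighbourhood {i} carries the whole fibre X_i;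
   so the points over C whose fibre coordinates lie in compact D_i form a compact set.  For
   K-analyticity, zoom a compact envelope of Y, trimmed so that the isolated points of Y stay
   isolated, with compact envelopes of the X_i: the result is a compact space containing
   Z(Y, X), and the Suslin schemes combine through Cantor pairing. *)

Lemma pred_ext {T : Type} (U V : T -> Prop) : (forall x, U x <-> V x) -> U = V.
Proof.
  intros H; apply functional_extensionality; intros x; apply propositional_extensionality; auto.
Qed.

Lemma sig_eq {T : Type} {P : T -> Prop} (p q : {x : T | P x}) :
  proj1_sig p = proj1_sig q -> p = q.
Proof. destruct p, q; simpl; intros ->; f_equal; apply proof_irrelevance. Qed.

Definition image {A B : Type} (e : A -> B) (b : B) : Prop := exists a, e a = b.

Lemma list_witnesses (A B : Type) (P : A -> Prop) (R : A -> B -> Prop) (l : list A) :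
  (forall a, In a l -> P a -> exists b, R a b) ->
  exists l', (forall b, In b l' -> exists a, In a l /\ P a /\ R a b) /\
             (forall a, In a l -> P a -> exists b, In b l' /\ R a b).
Proof.
  induction l as [|a l IH]; intros H.
  - exists []; split; [intros b []| intros a []].
  - destruct IH as [l' [H1 H2]].
    { intros a' Ha'; apply H; right; auto. }
    destruct (classic (P a)) as [Pa|nPa].
    + destruct (H a (or_introl eq_refl) Pa) as [b Rb].
      exists (b :: l'); split.
      * intros b' [<-|Hb']; [exists a; simpl; auto|].
        destruct (H1 b' Hb') as [a' [? [? ?]]]; exists a'; simpl; auto.
      * intros a' [<-|Ha'] Pa'; [exists b; simpl; auto|].
        destruct (H2 a' Ha' Pa') as [b' [? ?]]; exists b'; simpl; auto.
    + exists l'; split.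
      * intros b' Hb'; destruct (H1 b' Hb') as [a' [? [? ?]]]; exists a'; simpl; auto.
      * intros a' [<-|Ha'] Pa'; [contradiction|].
        destruct (H2 a' Ha' Pa') as [b' [? ?]]; exists b'; simpl; auto.
Qed.

Section OpenSets.
Variable X : space.

Lemma op_ext (U V : X -> Prop) : op X U -> (forall x, U x <-> V x) -> op X V.
Proof. intros H E; rewrite <- (pred_ext U V E); exact H. Qed.

Lemma op_local (U : X -> Prop) :
  (forall x, U x -> exists V, op X V /\ V x /\ forall y, V y -> U y) -> op X U.
Proof.
  intros H.
  apply op_ext with (U := fun x => exists V, (op X V /\ forall y, V y -> U y) /\ V x).
  - apply op_union. intros V [HV _]; exact HV.
  - intros x; split.
    + intros [V [[_ HV] Vx]]; auto.
    + intros Ux; destruct (H x Ux) as [V [HV [Vx HVU]]]; exists V; auto.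
Qed.

Lemma op_or (U V : X -> Prop) : op X U -> op X V -> op X (fun x => U x \/ V x).
Proof.
  intros HU HV. apply op_local. intros x [Ux|Vx].
  - exists U; split; auto.
  - exists V; split; auto.
Qed.

Lemma closed_compl (U : X -> Prop) : op X U -> closed X (fun x => ~ U x).
Proof.
  intros H; unfold closed; apply op_ext with U; auto.
  intros x; split; [tauto| apply NNPP].
Qed.

Lemma compact_ext (A A' : X -> Prop) :
  (forall x, A x <-> A' x) -> compact_set X A -> compact_set X A'.
Proof. intros E H; rewrite <- (pred_ext _ _ E); exact H. Qed.

Lemma compact_union (A1 A2 : X -> Prop) :
  compact_set X A1 -> compact_set X A2 -> compact_set X (fun x => A1 x \/ A2 x).
Proof.
  intros H1 H2 F HF Hc.
  destruct (H1 F HF) as [l1 [Hl1 Hl1']]; [intros x Ax; apply Hc; auto|].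
  destruct (H2 F HF) as [l2 [Hl2 Hl2']]; [intros x Ax; apply Hc; auto|].
  exists (l1 ++ l2); split.
  - intros U HU; apply in_app_or in HU; destruct HU; auto.
  - intros x [Ax|Ax]; [destruct (Hl1' x Ax) as [U [? ?]]|destruct (Hl2' x Ax) as [U [? ?]]];
      exists U; split; auto; apply in_or_app; auto.
Qed.

End OpenSets.

Definition cumul {T : Type} (A : nat -> T -> Prop) (k : nat) (x : T) : Prop :=
  exists m, (m <= k)%nat /\ A m x.

Lemma cumul_compact (X : space) (A : nat -> X -> Prop) :
  (forall m, compact_set X (A m)) -> forall k, compact_set X (cumul A k).
Proof.
  intros H k; induction k.
  - apply compact_ext with (A 0%nat); [|auto].
    intros x; split; [intros Ax; exists 0%nat; auto| intros [m [Hm Am]]].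
    assert (m = 0%nat) by (inversion Hm; auto). subst; auto.
  - apply compact_ext with (fun x => cumul A k x \/ A (S k) x); [|apply compact_union; auto].
    intros x; split.
    + intros [[m [Hm Am]]|Ax]; [exists m; split; auto| exists (S k); auto].
    + intros [m [Hm Am]]. inversion Hm; subst; [right; auto| left; exists m; auto].
Qed.

Lemma embedding_comp (A B C : space) (f : A -> B) (g : B -> C) :
  embedding A B f -> embedding B C g -> embedding A C (fun a => g (f a)).
Proof.
  intros [i1 [c1 t1]] [i2 [c2 t2]]; split; [|split].
  - intros x y E; apply i1, i2, E.
  - intros V HV; apply (c1 _ (c2 _ HV)).
  - intros U HU. destruct (t1 U HU) as [V [HV EV]]. destruct (t2 V HV) as [W [HW EW]].
    exists W; split; auto; intros x; rewrite EV; apply EW.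
Qed.

Lemma trace_open_of_local (A Z : space) (e : A -> Z) (U : A -> Prop) :
  (forall a, U a -> exists O, op Z O /\ O (e a) /\ forall a', O (e a') -> U a') ->
  exists V, op Z V /\ forall a, U a <-> V (e a).
Proof.
  intros H. exists (fun z => exists O, (op Z O /\ forall a', O (e a') -> U a') /\ O z); split.
  - apply op_union. intros O [HO _]; auto.
  - intros a; split.
    + intros Ua; destruct (H a Ua) as [O [HO [Oa HOs]]]; exists O; auto.
    + intros [O [[_ HOs] Oa]]; auto.
Qed.

Definition closed_embedding (A Z : space) (e : A -> Z) : Prop :=
  embedding A Z e /\ closed Z (image e).

Definition closed_hereditary (P : space -> Prop) : Prop :=
  forall (A Z : space) (e : A -> Z), closed_embedding A Z e -> P Z -> P A.

Lemma closed_embedding_compact (A Z : space) (e : A -> Z) (C : Z -> Prop) :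
  closed_embedding A Z e ->
  compact_set Z C -> compact_set A (fun a => C (e a)).
Proof.
  intros [[_ [_ Htr]] Hcl] HC F HF Hcov.
  set (F' := fun V : Z -> Prop => op Z V /\ exists U, F U /\ forall a, U a <-> V (e a)).
  destruct (HC (fun V => F' V \/ V = (fun z => ~ image e z))) as [l [Hl1 Hl2]].
  - intros V [[HV _]| ->]; auto.
  - intros z Cz. destruct (classic (image e z)) as [[a <-]|nI].
    + destruct (Hcov a Cz) as [U [FU Ua]].
      destruct (Htr U (HF U FU)) as [V [HV HUV]].
      exists V; split; [left; split; auto; exists U; auto| apply HUV; auto].
    + exists (fun z => ~ image e z); split; [right; auto| auto].
  - destruct (list_witnesses _ _ F' (fun V U => F U /\ forall a, U a <-> V (e a)) l)
      as [l' [H1 H2]].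
    + intros V _ [_ [U HU]]; exists U; auto.
    + exists l'; split.
      * intros U HU; destruct (H1 U HU) as [V [_ [_ [FU _]]]]; auto.
      * intros a Ca. destruct (Hl2 (e a) Ca) as [V [InV Ve]].
        destruct (Hl1 V InV) as [F'V| ->].
        -- destruct (H2 V InV F'V) as [U [InU [_ HUV]]]. exists U; split; auto; apply HUV; auto.
        -- exfalso; apply Ve; exists a; auto.
Qed.

Lemma compact_closed_hereditary : closed_hereditary compact_space.
Proof. intros A Z e He; exact (closed_embedding_compact A Z e (fun _ => True) He). Qed.

Lemma sigma_compact_closed_hereditary : closed_hereditary sigma_compact.
Proof.
  intros A Z e He [K [HK Hc]]. exists (fun m a => K m (e a)); split.
  - intros m; exact (closed_embedding_compact A Z e _ He (HK m)).
  - intros a; apply Hc.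
Qed.

Lemma K_analytic_closed_hereditary : closed_hereditary K_analytic.
Proof.
  intros A Z e [He Hcl] [K [eZ [F [HT [HK [HeZ [HF HS]]]]]]].
  destruct (proj2 (proj2 HeZ) _ Hcl) as [V [HV HVe]].
  exists K, (fun a => eZ (e a)), (fun s k => F s k /\ ~ V k).
  split; [auto|split; [auto|split; [eapply embedding_comp; eauto|split]]].
  - intros s. unfold closed. apply op_ext with (fun k => ~ F s k \/ V k).
    + apply op_or; [apply HF|exact HV].
    + intros k; split; [tauto|]. intros H.
      destruct (classic (V k)) as [Hv|Hv]; [right; exact Hv|]. left; intros Fk; apply H; auto.
  - intros z; split.
    + intros [a <-]. destruct (proj1 (HS (eZ (e a))) (ex_intro _ (e a) eq_refl)) as [sg Hsg].
      exists sg; intros k; split; auto. intros Vz. apply HVe in Vz. apply Vz; exists a; auto.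
    + intros [sg Hsg]. destruct (proj2 (HS z)) as [w <-].
      { exists sg; intros k; apply Hsg. }
      destruct (Hsg 0%nat) as [_ nV].
      destruct (classic (image e w)) as [[a <-]|nI]; [exists a; auto|].
      exfalso; apply nV, HVe, nI.
Qed.

Section Subspace.
Variables (K : space) (P : K -> Prop).

Definition sub_op (U : {k : K | P k} -> Prop) : Prop :=
  exists V, op K V /\ forall p, U p <-> V (proj1_sig p).

Lemma sub_op_full : sub_op (fun _ => True).
Proof. exists (fun _ => True); split; [apply op_full| tauto]. Qed.

Lemma sub_op_inter U V : sub_op U -> sub_op V -> sub_op (fun x => U x /\ V x).
Proof.
  intros [U' [HU EU]] [V' [HV EV]]; exists (fun k => U' k /\ V' k); split; [apply op_inter; auto|].
  intros p; rewrite EU, EV; tauto.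
Qed.

Lemma sub_op_union (F : ({k : K | P k} -> Prop) -> Prop) :
  (forall U, F U -> sub_op U) -> sub_op (fun x => exists U, F U /\ U x).
Proof.
  intros HF.
  exists (fun k => exists V', (op K V' /\ exists U, F U /\ forall p, U p <-> V' (proj1_sig p)) /\ V' k).
  split.
  - apply op_union. intros V' [H _]; auto.
  - intros p; split.
    + intros [U [FU Up]]. destruct (HF U FU) as [V' [HV' E]].
      exists V'; split; [split; auto; exists U; auto| apply E; auto].
    + intros [V' [[_ [U [FU E]]] Vp]]. exists U; split; auto; apply E; auto.
Qed.

Definition subspace : space := Space {k : K | P k} sub_op sub_op_full sub_op_inter sub_op_union.

Lemma subspace_embedding : embedding subspace K (fun p => proj1_sig p).
Proof.
  split; [|split].
  - intros x y; apply sig_eq.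
  - intros V HV; exists V; split; auto; tauto.
  - intros U [V [HV E]]; exists V; auto.
Qed.

Lemma embedding_into_subspace (A : space) (e : A -> K) (He : forall a, P (e a)) :
  embedding A K e -> embedding A subspace (fun a => exist _ (e a) (He a)).
Proof.
  intros [ie [ce te]]. split; [|split].
  - intros a b E. apply ie. apply (f_equal (@proj1_sig _ _)) in E; auto.
  - intros U [V [HV E]]. eapply op_ext; [apply (ce _ HV)|]. intros a; rewrite (E (exist _ _ _)); tauto.
  - intros U HU. destruct (te U HU) as [V [HV E]].
    exists (fun p : subspace => V (proj1_sig p)); split; auto.
    exists V; split; auto; tauto.
Qed.

Lemma closed_subspace_compact : compact_space K -> closed K P -> compact_space subspace.
Proof.
  intros HK HP. refine (compact_closed_hereditary _ _ _ (conj subspace_embedding _) HK).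
  unfold closed; apply op_ext with (fun k => ~ P k); auto.
  intros k; split; intros H1 H2; apply H1.
  - destruct H2 as [[k' Pk] <-]; auto.
  - exists (exist _ k H2); auto.
Qed.

Lemma subspace_tychonoff : tychonoff K -> tychonoff subspace.
Proof.
  intros [T1 CR]; split.
  - intros x. exists (fun k => ~ k = proj1_sig x); split; [apply T1|].
    intros p; split; intros H E; apply H; [apply sig_eq; auto| subst; auto].
  - intros C x [V [HV E]] nCx.
    assert (Vx : V (proj1_sig x)) by (apply E; auto).
    destruct (CR (fun k => ~ V k) (proj1_sig x)) as [f [cf [f0 [f1 f01]]]].
    + apply closed_compl; auto.
    + tauto.
    + exists (fun p => f (proj1_sig p)); split; [|split; [auto|split]].
      * intros a b. exists (fun k => (a < f k < b)%R); split; [apply cf| tauto].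
      * intros z Cz; apply f1; intros Vz; apply E in Vz; auto.
      * intros z; apply f01.
Qed.

End Subspace.

(* [zoom] fixes the partition of [Y] into non-isolated points and isolated points.
   Here it is generalised to any partition [B = n(N) + j(Idx)] whose [j]-part consists of
   isolated points; this is needed because the compact envelope of a K-analytic zoom
   space is such a generalised zoom over a compact base. *)
Section GeneralizedZoom.
Variables (B : space) (N : Type) (n : N -> B) (Idx : Type) (j : Idx -> B) (X : Idx -> space).

Definition gz_car : Type := (N + {i : Idx & pt (X i)})%type.
Definition gz_in (i : Idx) (x : X i) : gz_car := inr (existT (fun k => pt (X k)) i x).
Definition gz_proj (p : gz_car) : B := match p with inl y => n y | inr s => j (projT1 s) end.
Definition gz_V (U : B -> Prop) (p : gz_car) : Prop :=
  match p with inl y => U (n y) | inr s => U (j (projT1 s)) end.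
Definition gz_W (i : Idx) (W : X i -> Prop) (p : gz_car) : Prop :=
  exists x, W x /\ p = gz_in i x.

Definition gz_open (O : gz_car -> Prop) : Prop :=
  forall p, O p ->
    (exists U, op B U /\ gz_V U p /\ (forall q, gz_V U q -> O q)) \/
    (exists i W, op (X i) W /\ gz_W i W p /\ (forall q, gz_W i W q -> O q)).

Lemma gz_open_full : gz_open (fun _ => True).
Proof. intros p _. left. exists (fun _ => True). split; [apply op_full|]. split; [destruct p; exact I|intros; exact I]. Qed.

Lemma gz_open_union (F : (gz_car -> Prop) -> Prop) :
  (forall U, F U -> gz_open U) -> gz_open (fun x => exists U, F U /\ U x).
Proof.
  intros HF p [O [FO Op]].
  destruct (HF O FO p Op) as [[U [HU [Hp Hs]]] | [i [W [HW [Hp Hs]]]]].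
  - left. exists U. repeat split; auto. intros q Hq. exists O; auto.
  - right. exists i, W. split; auto. split; auto. intros q Hq. exists O; auto.
Qed.

Lemma gz_in_inj i x x' : gz_in i x = gz_in i x' -> x = x'.
Proof. unfold gz_in; intros E; injection E as E; apply inj_pair2 in E; auto. Qed.

Lemma gz_in_index i i' (x : X i) (x' : X i') : gz_in i x = gz_in i' x' -> i = i'.
Proof. intros E; inversion E; auto. Qed.

Lemma gz_V_proj U p : gz_V U p <-> U (gz_proj p).
Proof. destruct p; simpl; tauto. Qed.

Lemma gz_W_in i W x : gz_W i W (gz_in i x) <-> W x.
Proof.
  split; [intros [x' [Wx' E]]; apply gz_in_inj in E; subst; auto| intros Wx; exists x; auto].
Qed.

Lemma gz_open_inter (O1 O2 : gz_car -> Prop) :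
  gz_open O1 -> gz_open O2 -> gz_open (fun x => O1 x /\ O2 x).
Proof.
  intros H1 H2 p [P1 P2].
  destruct (H1 p P1) as [[U [HU [Hp Hs]]] | [i [W [HW [Hp Hs]]]]],
    (H2 p P2) as [[U' [HU' [Hp' Hs']]] | [i' [W' [HW' [Hp' Hs']]]]].
  - left. exists (fun y => U y /\ U' y). split; [apply op_inter; auto|].
    split; [destruct p; simpl in *; auto|].
    intros q Hq; split; [apply Hs|apply Hs']; destruct q; simpl in *; tauto.
  - right. exists i', W'. split; auto. split; auto. intros q Hq. split; auto. apply Hs.
    destruct Hp' as [x [_ ->]]. destruct Hq as [z [_ ->]]. exact Hp.
  - right. exists i, W. split; auto. split; auto. intros q Hq. split; auto. apply Hs'.
    destruct Hp as [x [_ ->]]. destruct Hq as [z [_ ->]]. exact Hp'.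
  - destruct Hp as [x [Wx ->]]. destruct Hp' as [x' [Wx' E]].
    pose proof (gz_in_index _ _ _ _ E) as <-. apply gz_in_inj in E as ->.
    right. exists i, (fun z => W z /\ W' z). split; [apply op_inter; auto|].
    split; [exists x'; auto|].
    intros q [z [[Wz Wz'] ->]]. split; [apply Hs | apply Hs']; exists z; auto.
Qed.

Definition gzoom : space := Space gz_car gz_open gz_open_full gz_open_inter gz_open_union.

Lemma op_gz_V U : op B U -> op gzoom (gz_V U).
Proof. intros HU p Hp; left; exists U; auto. Qed.

Lemma op_gz_W i W : op (X i) W -> op gzoom (gz_W i W).
Proof. intros HW p Hp; right; exists i, W; auto. Qed.

Lemma gz_proj_continuous : continuous gzoom B gz_proj.
Proof. intros U HU. eapply op_ext; [apply op_gz_V, HU|]. apply gz_V_proj. Qed.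

Lemma gz_in_continuous i : continuous (X i) gzoom (gz_in i).
Proof.
  intros O HO. apply op_local. intros x Ox.
  destruct (HO _ Ox) as [[U [HU [Hp Hs]]] | [i' [W [HW [Hp Hs]]]]].
  - exists (fun _ => True); split; [apply op_full|split; auto].
  - destruct Hp as [x' [Wx' E]]. pose proof (gz_in_index _ _ _ _ E) as <-.
    apply gz_in_inj in E as <-.
    exists W; split; auto; split; auto. intros y Wy; apply Hs; exists y; auto.
Qed.

Lemma gz_in_embedding i : embedding (X i) gzoom (gz_in i).
Proof.
  split; [|split].
  - intros a b; apply gz_in_inj.
  - apply gz_in_continuous.
  - intros W HW; exists (gz_W i W); split; [apply op_gz_W; auto|].
    intros x; rewrite gz_W_in; tauto.
Qed.

Record zoom_partition : Prop := {
  zp_cover : forall b, (exists a, n a = b) \/ (exists i, j i = b);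
  zp_disjoint : forall a i, n a <> j i;
  zp_n_inj : forall a a', n a = n a' -> a = a';
  zp_j_inj : forall i i', j i = j i' -> i = i';
  zp_j_isolated : forall i, op B (fun b => b = j i)
}.

Hypothesis Hpart : zoom_partition.

Definition gz_set (C : B -> Prop) (D : forall i, X i -> Prop) (p : gz_car) : Prop :=
  match p with inl a => C (n a) | inr s => C (j (projT1 s)) /\ D (projT1 s) (projT2 s) end.

Definition finitely_covered (G : (gz_car -> Prop) -> Prop) (S : gz_car -> Prop) : Prop :=
  exists l, (forall O, In O l -> G O) /\ forall p, S p -> exists O, In O l /\ O p.

Lemma gz_set_locally_covered C D G : (forall i, compact_set (X i) (D i)) ->
  (forall O, G O -> op gzoom O) -> (forall p, gz_set C D p -> exists O, G O /\ O p) ->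
  forall b, C b -> exists U, op B U /\ U b /\
    finitely_covered G (fun p => gz_V U p /\ gz_set C D p).
Proof.
  intros HD HG Hcov b Cb. destruct (zp_cover Hpart b) as [[a <-]|[i <-]].
  - destruct (Hcov (inl a) Cb) as [O [GO Oa]].
    destruct (HG O GO _ Oa) as [[U [HU [Hp Hs]]] | [i [W [_ [[x [_ E]] _]]]]]; [|discriminate].
    exists U; split; [auto|split; [exact Hp|exists [O]; split]].
    + intros O' [<-|[]]; auto.
    + intros p [Up _]; exists O; split; [left; auto| apply Hs; auto].
  - destruct (HD i (fun W => exists O, G O /\ W = (fun x => O (gz_in i x)))) as [lW [HlW1 HlW2]].
    + intros W [O [GO ->]]. apply gz_in_continuous, HG, GO.
    + intros x Dx. destruct (Hcov (gz_in i x)) as [O [GO Ox]]; [simpl; auto|].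
      exists (fun x => O (gz_in i x)); split; [exists O; auto| auto].
    + destruct (list_witnesses _ _ (fun _ => True)
        (fun W O => G O /\ W = fun x => O (gz_in i x)) lW) as [lO [HO1 HO2]].
      { intros W HW _; destruct (HlW1 W HW) as [O [GO E]]; exists O; auto. }
      exists (fun b => b = j i); split; [apply (zp_j_isolated Hpart)|split; [reflexivity|]].
      exists lO; split.
      * intros O HO; destruct (HO1 O HO) as [W [_ [_ [GO _]]]]; auto.
      * intros [a|[i' x]] [Hp Hs]; simpl in Hp.
        -- exfalso; eapply (zp_disjoint Hpart); eauto.
        -- apply (zp_j_inj Hpart) in Hp; subst i'.
           destruct Hs as [_ Dx]. destruct (HlW2 x Dx) as [W [InW Wx]].
           destruct (HO2 W InW I) as [O [InO [GO ->]]]. exists O; split; auto.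
Qed.

Lemma gz_set_compact C D : compact_set B C -> (forall i, compact_set (X i) (D i)) ->
  compact_set gzoom (gz_set C D).
Proof.
  intros HC HD G HG Hcov.
  set (Fin := fun U => op B U /\ finitely_covered G (fun p => gz_V U p /\ gz_set C D p)).
  destruct (HC Fin) as [lU [HlU1 HlU2]].
  - intros U [HU _]; auto.
  - intros b Cb. destruct (gz_set_locally_covered C D G HD HG Hcov b Cb) as [U [HU [Ub HF]]].
    exists U; split; [split|]; auto.
  - destruct (list_witnesses _ _ Fin (fun U l => (forall O, In O l -> G O) /\
       forall p, gz_V U p /\ gz_set C D p -> exists O, In O l /\ O p) lU) as [LL [H1 H2]].
    { intros U _ [_ HU]; exact HU. }
    exists (concat LL); split.
    + intros O HO; apply in_concat in HO; destruct HO as [l [Inl InO]].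
      destruct (H1 l Inl) as [U [_ [_ [Hl _]]]]; auto.
    + intros p Sp. assert (Cp : C (gz_proj p)) by (destruct p; simpl in *; tauto).
      destruct (HlU2 _ Cp) as [U [InU Up]].
      destruct (H2 U InU (HlU1 U InU)) as [l [Inl [_ Hl]]].
      destruct (Hl p (conj (proj2 (gz_V_proj U p) Up) Sp)) as [O [InO Op]].
      exists O; split; auto. apply in_concat; eauto.
Qed.

Lemma gzoom_compact : compact_space B -> (forall i, compact_space (X i)) -> compact_space gzoom.
Proof.
  intros HB HX. apply compact_ext with (gz_set (fun _ => True) (fun _ _ => True)).
  - intros [a|[i x]]; simpl; tauto.
  - apply gz_set_compact; auto.
Qed.

Hypothesis HB : tychonoff B.
Hypothesis HX : forall i, tychonoff (X i).

Lemma gz_in_image_closed i : closed gzoom (image (gz_in i)).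
Proof.
  unfold closed. apply op_local. intros [a|[i' y']] nq.
  - exists (gz_V (fun b => b <> j i)); split; [apply op_gz_V; apply (proj1 HB)|split].
    + apply (zp_disjoint Hpart).
    + intros q Hq [y <-]; apply Hq; reflexivity.
  - assert (ni : i' <> i) by (intros ->; apply nq; exists y'; auto).
    exists (gz_W i' (fun _ => True)); split; [apply op_gz_W, op_full|split].
    + exists y'; auto.
    + intros q [x' [_ ->]] [y E]. apply gz_in_index in E; auto.
Qed.

Lemma gzoom_T1 (p0 : gzoom) : closed gzoom (fun z => z = p0).
Proof.
  unfold closed. apply op_local. intros p np.
  destruct p as [a|[i x]], p0 as [a0|[i0 x0]].
  - exists (gz_V (fun b => b <> n a0)); split; [apply op_gz_V; apply (proj1 HB)|split].
    + simpl; intros E; apply np; f_equal; apply (zp_n_inj Hpart); auto.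
    + intros q Hq E; subst q; apply Hq; reflexivity.
  - exists (gz_V (fun b => b <> j i0)); split; [apply op_gz_V; apply (proj1 HB)|split].
    + apply (zp_disjoint Hpart).
    + intros q Hq E; subst q; apply Hq; reflexivity.
  - exists (gz_W i (fun _ => True)); split; [apply op_gz_W, op_full|split].
    + exists x; auto.
    + intros q [x' [_ ->]] E; discriminate.
  - destruct (classic (i = i0)) as [<-|ni].
    + exists (gz_W i (fun y => y <> x0)); split; [apply op_gz_W; apply (proj1 (HX i))|split].
      * exists x; split; auto. intros ->; apply np; auto.
      * intros q [x' [nx ->]] E. apply nx. apply gz_in_inj in E; auto.
    + exists (gz_W i (fun _ => True)); split; [apply op_gz_W, op_full|split].
      * exists x; auto.
      * intros q [x' [_ ->]] E. apply gz_in_index in E; auto.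
Qed.

Definition gz_extend (i : Idx) (g : X i -> R) (q : gz_car) : R :=
  match excluded_middle_informative (image (gz_in i) q) with
  | left H => g (proj1_sig (constructive_indefinite_description _ H))
  | right _ => 1%R
  end.

Lemma gz_extend_in i g y : gz_extend i g (gz_in i y) = g y.
Proof.
  unfold gz_extend; destruct (excluded_middle_informative _) as [H|H].
  - destruct (constructive_indefinite_description _ H) as [y' E]; simpl.
    apply gz_in_inj in E; subst; reflexivity.
  - exfalso; apply H; exists y; reflexivity.
Qed.

Lemma gz_extend_out i g q : ~ image (gz_in i) q -> gz_extend i g q = 1%R.
Proof. intros H; unfold gz_extend; destruct (excluded_middle_informative _); tauto. Qed.

Lemma gz_extend_continuous i g :
  continuous_R (X i) g -> continuous_R gzoom (gz_extend i g).
Proof.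
  intros cg a b. apply op_local. intros q Hq.
  destruct (classic (image (gz_in i) q)) as [[y <-]|nq].
  - exists (gz_W i (fun y => (a < g y < b)%R)); split; [apply op_gz_W, cg|split].
    + exists y; split; auto. rewrite gz_extend_in in Hq; auto.
    + intros q' [y' [Hy' ->]]. rewrite gz_extend_in; auto.
  - exists (fun q => ~ image (gz_in i) q); split; [apply gz_in_image_closed|split; auto].
    intros q' nq'. rewrite (gz_extend_out _ _ _ nq'). rewrite (gz_extend_out _ _ _ nq) in Hq; auto.
Qed.

Lemma gzoom_tychonoff : tychonoff gzoom.
Proof.
  split; [apply gzoom_T1|].
  intros C p HC nCp. destruct (HC p nCp) as [[U [HU [Up Hs]]] | [i [W [HW [Wp Hs]]]]].
  - destruct (proj2 HB (fun b => ~ U b) (gz_proj p)) as [g [cg [g0 [g1 g01]]]];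
      [apply closed_compl; auto| apply gz_V_proj in Up; tauto|].
    exists (fun q => g (gz_proj q)). split; [|split; [auto|split]].
    + intros a b. apply (gz_proj_continuous _ (cg a b)).
    + intros z Cz. apply g1. intros Uz. exact (Hs z (proj2 (gz_V_proj U z) Uz) Cz).
    + intros; apply g01.
  - destruct Wp as [x [Wx ->]].
    destruct (proj2 (HX i) (fun y => ~ W y) x) as [g [cg [g0 [g1 g01]]]];
      [apply closed_compl; auto| tauto|].
    exists (gz_extend i g); split; [apply gz_extend_continuous, cg|split; [|split]].
    + rewrite gz_extend_in; auto.
    + intros z Cz. destruct (classic (image (gz_in i) z)) as [[y <-]|nz].
      * rewrite gz_extend_in. apply g1. intros Wy. apply (Hs (gz_in i y)); auto.
        exists y; auto.
      * apply (gz_extend_out _ _ _ nz).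
    + intros z. destruct (classic (image (gz_in i) z)) as [[y <-]|nz].
      * rewrite gz_extend_in; auto.
      * rewrite (gz_extend_out _ _ _ nz); split; [apply Rle_0_1| apply Rle_refl].
Qed.

End GeneralizedZoom.

Arguments gz_in {N Idx X} i x.
Arguments gz_W {N Idx X} i W p.
Arguments gz_in_index {N Idx X i i' x x'} E.

Lemma dependent_choice {A : Type} {B : A -> Type} (R : forall a, B a -> Prop) :
  (forall a, exists b, R a b) -> exists f : forall a, B a, forall a, R a (f a).
Proof.
  intros H. exists (fun a => proj1_sig (constructive_indefinite_description _ (H a))).
  intros a; exact (proj2_sig (constructive_indefinite_description _ (H a))).
Qed.

Section Zoom.
Variables (Y : space) (X : Iso Y -> space).

Definition zoom_g : space :=
  gzoom Y (NIso Y) (fun a => proj1_sig a) (Iso Y) (fun i => proj1_sig i) X.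

Lemma zoom_as_gzoom : zoom Y X = zoom_g.
Proof. unfold zoom, zoom_g, gzoom. f_equal; apply proof_irrelevance. Qed.

Lemma iso_zoom_partition :
  zoom_partition Y (NIso Y) (fun a => proj1_sig a) (Iso Y) (fun i => proj1_sig i).
Proof.
  split.
  - intros b. destruct (classic (isolated Y b)) as [h|h].
    + right; exists (exist _ b h); auto.
    + left; exists (exist _ b h); auto.
  - intros [a ha] [i hi]; simpl; intros ->; auto.
  - intros a a'; apply sig_eq.
  - intros i i'; apply sig_eq.
  - intros [i hi]; exact hi.
Qed.

Hypothesis HY : tychonoff Y.
Hypothesis HX : forall i, tychonoff (X i).

Lemma zoom_fibre_closed_embedding i : closed_embedding (X i) zoom_g (gz_in i).
Proof.
  split; [apply gz_in_embedding|].
  apply (gz_in_image_closed Y _ _ _ _ X iso_zoom_partition HY).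
Qed.

Variable x0 : forall i, X i.

Definition zoom_section (y : Y) : zoom_g :=
  match excluded_middle_informative (isolated Y y) with
  | left h => gz_in (X := X) (exist _ y h) (x0 (exist _ y h))
  | right h => inl (exist _ y h)
  end.

Lemma zoom_section_proj y :
  gz_proj Y (NIso Y) (fun a => proj1_sig a) (Iso Y) (fun i => proj1_sig i) X (zoom_section y) = y.
Proof. unfold zoom_section; destruct (excluded_middle_informative _); reflexivity. Qed.

Lemma zoom_section_iso i : zoom_section (proj1_sig i) = gz_in i (x0 i).
Proof.
  unfold zoom_section; destruct (excluded_middle_informative _) as [h|h].
  - assert (E : exist _ (proj1_sig i) h = i) by (apply sig_eq; auto). rewrite E; auto.
  - exfalso; apply h, (proj2_sig i).
Qed.

Lemma zoom_section_niso a : zoom_section (proj1_sig a) = inl a.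
Proof.
  unfold zoom_section; destruct (excluded_middle_informative _) as [h|h].
  - exfalso; apply (proj2_sig a), h.
  - f_equal; apply sig_eq; auto.
Qed.

Lemma zoom_section_embedding : embedding Y zoom_g zoom_section.
Proof.
  split; [|split].
  - intros y y' E. rewrite <- (zoom_section_proj y), <- (zoom_section_proj y'), E; auto.
  - intros O HO. apply op_local. intros y Oy.
    destruct (HO _ Oy) as [[U [HU [Hp Hs]]] | [i [W [HW [Hp Hs]]]]].
    + exists U; split; auto; split.
      * apply gz_V_proj in Hp; rewrite zoom_section_proj in Hp; auto.
      * intros y' Uy'; apply Hs, gz_V_proj; rewrite zoom_section_proj; auto.
    + destruct Hp as [x [_ E]]. unfold zoom_section in E.
      destruct (excluded_middle_informative _) as [h|h]; [|discriminate].
      exists (fun z => z = y); split; [exact h|split; auto]. intros y' ->; auto.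
  - intros U HU. exists (gz_V Y (NIso Y) (fun a => proj1_sig a) (Iso Y) (fun i => proj1_sig i) X U); split.
    + apply op_gz_V; auto.
    + intros y; rewrite gz_V_proj, zoom_section_proj; tauto.
Qed.

Lemma zoom_section_closed_embedding : closed_embedding Y zoom_g zoom_section.
Proof.
  split; [apply zoom_section_embedding|].
  unfold closed. apply op_local. intros [a|[i x]] np.
  - exfalso; apply np; exists (proj1_sig a); apply zoom_section_niso.
  - assert (nx : x <> x0 i) by (intros ->; apply np; exists (proj1_sig i); apply zoom_section_iso).
    exists (gz_W (X := X) i (fun y => y <> x0 i)); split; [apply op_gz_W; apply (proj1 (HX i))|split].
    + exists x; auto.
    + intros q [x' [nx' ->]] [y E].
      assert (Ey : y = proj1_sig i).
      { pose proof (zoom_section_proj y) as P. rewrite E in P. symmetry; exact P. }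
      subst y. rewrite zoom_section_iso in E. apply gz_in_inj in E. auto.
Qed.

End Zoom.

Lemma zoom_closed_hereditary (P : space -> Prop) (Y : space) (X : Iso Y -> space) :
  closed_hereditary P -> tychonoff Y -> (forall i, tychonoff (X i)) ->
  (forall i, inhabited (pt (X i))) ->
  P (zoom Y X) -> P Y /\ forall i, P (X i).
Proof.
  intros HP HY HX Hne HZ. rewrite zoom_as_gzoom in HZ. split.
  - set (x0 := fun i => epsilon (Hne i) (fun _ => True)).
    exact (HP _ _ _ (zoom_section_closed_embedding Y X HX x0) HZ).
  - intros i; exact (HP _ _ _ (zoom_fibre_closed_embedding Y X HY i) HZ).
Qed.

Record suslin_envelope (A K : space) (e : A -> K) (F : list nat -> K -> Prop) : Prop := {
  se_tychonoff : tychonoff K;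
  se_compact : compact_space K;
  se_embedding : embedding A K e;
  se_closed : forall s, closed K (F s);
  se_image : forall z, image e z <->
    exists sigma : nat -> nat, forall k, F (map sigma (seq 0 (S k))) z
}.

Lemma K_analytic_envelope (A : space) :
  K_analytic A <-> exists K e F, suslin_envelope A K e F.
Proof.
  split.
  - intros [K [e [F [? [? [? [? ?]]]]]]]; exists K, e, F; split; auto.
  - intros [K [e [F []]]]; exists K, e, F; auto.
Qed.

Definition unpair1 (m : nat) : nat := fst (Cantor.of_nat m).
Definition unpair2 (m : nat) : nat := snd (Cantor.of_nat m).

Lemma map_unpair1 (a b : nat -> nat) l :
  map unpair1 (map (fun m => Cantor.to_nat (a m, b m)) l) = map a l.
Proof.
  rewrite map_map; apply map_ext; intros m; unfold unpair1; rewrite Cantor.cancel_of_to; auto.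
Qed.

Lemma map_unpair2 (a b : nat -> nat) l :
  map unpair2 (map (fun m => Cantor.to_nat (a m, b m)) l) = map b l.
Proof.
  rewrite map_map; apply map_ext; intros m; unfold unpair2; rewrite Cantor.cancel_of_to; auto.
Qed.

(* The compact envelope of [Z(Y, X)] is a generalised zoom of a closed subspace [KT] of an
   envelope [KY] of [Y], with the envelopes [Kf i] of the [X i] as fibres. *)
Section KAnalyticZoom.
Variables (Y : space) (X : Iso Y -> space).
Variables (KY : space) (eY : Y -> KY) (A : list nat -> KY -> Prop).
Hypothesis HeY : suslin_envelope Y KY eY A.
Variables (Kf : Iso Y -> space) (ef : forall i, X i -> Kf i)
  (Ff : forall i, list nat -> Kf i -> Prop).
Hypothesis HKf : forall i, suslin_envelope (X i) (Kf i) (ef i) (Ff i).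

(* [KY] need not keep the isolated points of [Y] isolated; removing every point [k <> eY i]
   of an open [V] with [V ∩ Y = {i}] makes [eY i] isolated in what remains. *)
Definition stray (k : KY) : Prop :=
  exists (i : Iso Y) V, op KY V /\ (forall y, y = proj1_sig i <-> V (eY y)) /\
    V k /\ k <> eY (proj1_sig i).

Lemma stray_open : op KY stray.
Proof.
  apply op_local. intros k [i [V [HV [E [Vk nk]]]]].
  exists (fun k' => V k' /\ k' <> eY (proj1_sig i)); split; [|split; auto].
  - apply op_inter; [auto| apply (se_tychonoff _ _ _ _ HeY)].
  - intros k' [Vk' nk']; exists i, V; auto.
Qed.

Lemma stray_eY y : ~ stray (eY y).
Proof. intros [i [V [HV [E [Vk nk]]]]]. apply E in Vk. subst; auto. Qed.

Definition KT : space := subspace KY (fun k => ~ stray k).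
Definition eT (y : Y) : KT := exist _ (eY y) (stray_eY y).
Definition jT (i : Iso Y) : KT := eT (proj1_sig i).
Definition NT : Type := {b : KT | ~ image jT b}.
Definition KZ : space := gzoom KT NT (fun a => proj1_sig a) (Iso Y) jT Kf.

Lemma eT_embedding : embedding Y KT eT.
Proof. apply embedding_into_subspace, (se_embedding _ _ _ _ HeY). Qed.

Lemma jT_isolated i : op KT (fun b => b = jT i).
Proof.
  destruct (proj2 (proj2 (se_embedding _ _ _ _ HeY)) (fun y => y = proj1_sig i) (proj2_sig i))
    as [V [HV E]].
  exists V; split; auto. intros [k Pk]; split.
  - intros Ek. apply (f_equal (@proj1_sig _ _)) in Ek. simpl in Ek. subst k. apply E; auto.
  - intros Vk. apply sig_eq. simpl. destruct (classic (k = eY (proj1_sig i))) as [h|h]; auto.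
    exfalso; apply Pk; exists i, V; auto.
Qed.

Lemma KZ_partition : zoom_partition KT NT (fun a => proj1_sig a) (Iso Y) jT.
Proof.
  split.
  - intros b. destruct (classic (image jT b)) as [h|h]; [right; auto| left; exists (exist _ b h); auto].
  - intros [b h] i; simpl; intros ->; apply h; exists i; auto.
  - intros a a'; apply sig_eq.
  - intros i i' E. apply (proj1 eT_embedding) in E. apply sig_eq; auto.
  - apply jT_isolated.
Qed.

Lemma KZ_tychonoff : tychonoff KZ.
Proof.
  apply gzoom_tychonoff; [apply KZ_partition| |intros i; apply (se_tychonoff _ _ _ _ (HKf i))].
  apply subspace_tychonoff, (se_tychonoff _ _ _ _ HeY).
Qed.

Lemma KZ_compact : compact_space KZ.
Proof.
  apply gzoom_compact; [apply KZ_partition| |intros i; apply (se_compact _ _ _ _ (HKf i))].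
  apply closed_subspace_compact; [apply (se_compact _ _ _ _ HeY)|].
  apply closed_compl, stray_open.
Qed.

Lemma eT_niso (a : NIso Y) : ~ image jT (eT (proj1_sig a)).
Proof.
  intros [i E]. apply (proj1 eT_embedding) in E. apply (proj2_sig a). rewrite <- E.
  apply (proj2_sig i).
Qed.

Definition eZ (p : zoom_g Y X) : KZ :=
  match p with
  | inl a => inl (exist _ (eT (proj1_sig a)) (eT_niso a))
  | inr s => gz_in (projT1 s) (ef _ (projT2 s))
  end.

Lemma eZ_injective p q : eZ p = eZ q -> p = q.
Proof.
  destruct p as [a|[i x]], q as [a'|[i' x']]; simpl; intros E; try discriminate.
  - injection E as E. apply (proj1 (se_embedding _ _ _ _ HeY)) in E.
    f_equal; apply sig_eq; auto.
  - pose proof (gz_in_index E) as <-. apply gz_in_inj in E.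
    apply (proj1 (se_embedding _ _ _ _ (HKf i))) in E. subst; auto.
Qed.

Lemma eZ_continuous : continuous (zoom_g Y X) KZ eZ.
Proof.
  intros O HO. apply op_local. intros z Oz.
  destruct (HO _ Oz) as [[U [HU [Hp Hs]]] | [i [W [HW [Hp Hs]]]]].
  - exists (gz_V Y (NIso Y) (fun a => proj1_sig a) (Iso Y) (fun i => proj1_sig i) X
      (fun y => U (eT y))).
    split; [apply op_gz_V; apply (proj1 (proj2 eT_embedding)); auto|split].
    + destruct z as [a|[i x]]; simpl in *; auto.
    + intros q Hq; apply Hs; destruct q as [a|[i x]]; simpl in *; auto.
  - destruct Hp as [w [Ww E]]. destruct z as [a|[i' x]]; [discriminate|].
    pose proof (gz_in_index E) as Ei; subst i; rename i' into i. apply gz_in_inj in E; subst w.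
    exists (gz_W (X := X) i (fun x => W (ef i x))); split;
      [apply op_gz_W; apply (proj1 (proj2 (se_embedding _ _ _ _ (HKf i)))); auto|split].
    + exists x; auto.
    + intros q [x'' [Wx'' ->]]; apply Hs; exists (ef i x''); auto.
Qed.

Lemma eZ_open_trace (U : zoom_g Y X -> Prop) :
  op (zoom_g Y X) U -> exists V, op KZ V /\ forall p, U p <-> V (eZ p).
Proof.
  intros HU. apply trace_open_of_local. intros z Uz.
  destruct (HU _ Uz) as [[U' [HU' [Hp Hs]]] | [i [W [HW [Hp Hs]]]]].
  - destruct (proj2 (proj2 eT_embedding) U' HU') as [U'' [HU'' E]].
    exists (gz_V KT NT (fun a => proj1_sig a) (Iso Y) jT Kf U''); split; [apply op_gz_V; auto|split].
    + destruct z as [a|[i x]]; simpl in *; apply E; auto.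
    + intros z' Hz'; apply Hs; destruct z' as [a|[i x]]; simpl in *; apply E; auto.
  - destruct (proj2 (proj2 (se_embedding _ _ _ _ (HKf i))) W HW) as [W'' [HW'' E]].
    exists (gz_W (X := Kf) i W''); split; [apply op_gz_W; auto|split].
    + destruct Hp as [x [Wx ->]]. exists (ef i x); split; [apply E; auto| reflexivity].
    + intros [a|[i' x']] [x'' [Wx'' Ex]]; [discriminate|].
      pose proof (gz_in_index Ex) as <-. apply gz_in_inj in Ex; subst x''.
      apply Hs. exists x'; split; auto. apply E; auto.
Qed.

Lemma eZ_embedding : embedding (zoom_g Y X) KZ eZ.
Proof. split; [exact eZ_injective|split; [exact eZ_continuous|exact eZ_open_trace]]. Qed.

(* The scheme of [eZ p] is indexed by Cantor-paired sequences: the first components follow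
   the scheme of [Y] at the base point, the second ones that of the fibre. *)
Definition FZ (s : list nat) (p : KZ) : Prop :=
  match p with
  | inl b => A (map unpair1 s) (proj1_sig (proj1_sig b))
  | inr t => A (map unpair1 s) (eY (proj1_sig (projT1 t))) /\ Ff (projT1 t) (map unpair2 s) (projT2 t)
  end.

Lemma FZ_closed s : closed KZ (FZ s).
Proof.
  unfold closed. apply op_local. intros p np.
  assert (HU : op KT (fun q : KT => ~ A (map unpair1 s) (proj1_sig q))).
  { exists (fun k => ~ A (map unpair1 s) k); split; [apply (se_closed _ _ _ _ HeY)| tauto]. }
  destruct p as [b|[i k]]; simpl in np.
  - exists (gz_V KT NT (fun a => proj1_sig a) (Iso Y) jT Kf
      (fun q : KT => ~ A (map unpair1 s) (proj1_sig q))); split; [apply op_gz_V; auto|split].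
    + simpl; auto.
    + intros q Hq; destruct q as [a|[i x]]; simpl in *; tauto.
  - destruct (classic (A (map unpair1 s) (eY (proj1_sig i)))) as [Ha|Ha].
    + exists (gz_W (X := Kf) i (fun k => ~ Ff i (map unpair2 s) k)); split;
        [apply op_gz_W; apply (se_closed _ _ _ _ (HKf i))|split].
      * exists k; split; [tauto|auto].
      * intros q [k' [nF ->]]; simpl; tauto.
    + exists (gz_V KT NT (fun a => proj1_sig a) (Iso Y) jT Kf
        (fun q : KT => ~ A (map unpair1 s) (proj1_sig q))); split; [apply op_gz_V; auto|split].
      * simpl; auto.
      * intros q Hq; destruct q as [a|[i' x]]; simpl in *; tauto.
Qed.

Lemma FZ_image (p : KZ) :
  image eZ p <-> exists sigma : nat -> nat, forall k, FZ (map sigma (seq 0 (S k))) p.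
Proof.
  split.
  - intros [z <-]. destruct z as [a|[i x]].
    + destruct (proj1 (se_image _ _ _ _ HeY (eY (proj1_sig a))) (ex_intro _ _ eq_refl))
        as [s1 Hs1].
      exists (fun m => Cantor.to_nat (s1 m, 0%nat)); intros k; unfold FZ, eZ.
      rewrite (map_unpair1 s1 (fun _ => 0%nat)). apply Hs1.
    + destruct (proj1 (se_image _ _ _ _ HeY (eY (proj1_sig i))) (ex_intro _ _ eq_refl))
        as [s1 Hs1].
      destruct (proj1 (se_image _ _ _ _ (HKf i) (ef i x)) (ex_intro _ _ eq_refl)) as [s2 Hs2].
      exists (fun m => Cantor.to_nat (s1 m, s2 m)); intros k; unfold FZ, eZ.
      rewrite (map_unpair1 s1 s2), (map_unpair2 s1 s2). split; [apply Hs1| apply Hs2].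
  - intros [sg Hsg]. destruct p as [b|[i k]].
    + destruct (proj2 (se_image _ _ _ _ HeY (proj1_sig (proj1_sig b)))) as [y Ey].
      { exists (fun m => unpair1 (sg m)); intros k. specialize (Hsg k); unfold FZ in Hsg.
        rewrite map_map in Hsg; auto. }
      destruct (classic (isolated Y y)) as [h|h].
      * exfalso. apply (proj2_sig b). exists (exist _ y h). apply sig_eq. simpl. auto.
      * exists (inl (exist _ y h)). simpl. f_equal. apply sig_eq. simpl. apply sig_eq. simpl. auto.
    + destruct (proj2 (se_image _ _ _ _ (HKf i) k)) as [x Ex].
      { exists (fun m => unpair2 (sg m)); intros k'. specialize (Hsg k'); unfold FZ in Hsg; cbn [projT1 projT2] in Hsg.
        rewrite !map_map in Hsg; tauto. }
      exists (inr (existT _ i x)). simpl. rewrite Ex. auto.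
Qed.

Lemma zoom_suslin_envelope : suslin_envelope (zoom_g Y X) KZ eZ FZ.
Proof.
  split; [exact KZ_tychonoff|exact KZ_compact|exact eZ_embedding|exact FZ_closed|exact FZ_image].
Qed.

End KAnalyticZoom.

Lemma zoom_K_analytic (Y : space) (X : Iso Y -> space) :
  K_analytic Y -> (forall i, K_analytic (X i)) -> K_analytic (zoom Y X).
Proof.
  intros HY HX. rewrite zoom_as_gzoom.
  apply K_analytic_envelope in HY as [KY [eY [A HeY]]].
  destruct (dependent_choice (fun i K => exists e F, suslin_envelope (X i) K e F))
    as [Kf HKf]; [intros i; apply K_analytic_envelope, HX|].
  destruct (dependent_choice (B := fun i => X i -> Kf i)
    (fun i e => exists F, suslin_envelope (X i) (Kf i) e F) HKf) as [ef Hef].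
  destruct (dependent_choice (B := fun i => list nat -> Kf i -> Prop)
    (fun i F => suslin_envelope (X i) (Kf i) (ef i) F) Hef) as [Ff HFf].
  apply K_analytic_envelope.
  eexists _, _, _; exact (zoom_suslin_envelope Y X KY eY A HeY Kf ef Ff HFf).
Qed.

Lemma zoom_compact (Y : space) (X : Iso Y -> space) :
  compact_space Y -> (forall i, compact_space (X i)) -> compact_space (zoom Y X).
Proof.
  intros HY HX. rewrite zoom_as_gzoom. apply gzoom_compact; [apply iso_zoom_partition|auto|auto].
Qed.

Lemma zoom_sigma_compact (Y : space) (X : Iso Y -> space) :
  sigma_compact Y -> (forall i, sigma_compact (X i)) -> sigma_compact (zoom Y X).
Proof.
  intros [K [HK Hc]] HXs. rewrite zoom_as_gzoom.
  destruct (dependent_choice (fun i (D : nat -> X i -> Prop) =>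
    (forall m, compact_set (X i) (D m)) /\ (forall x, exists m, D m x)) HXs) as [D HD].
  exists (fun m => gz_set Y (NIso Y) (fun a => proj1_sig a) (Iso Y) (fun i => proj1_sig i) X
    (cumul K m) (fun i => cumul (D i) m)); split.
  - intros m. apply gz_set_compact; [apply iso_zoom_partition| apply cumul_compact; auto|].
    intros i; apply cumul_compact, HD.
  - intros [a|[i x]].
    + destruct (Hc (proj1_sig a)) as [m Hm]. exists m; simpl. exists m; auto.
    + destruct (Hc (proj1_sig i)) as [m1 Hm1]. destruct (proj2 (HD i) x) as [m2 Hm2].
      exists (m1 + m2)%nat; simpl; split.
      * exists m1; split; auto. apply PeanoNat.Nat.le_add_r.
      * exists m2; split; auto. rewrite PeanoNat.Nat.add_comm. apply PeanoNat.Nat.le_add_r.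
Qed.

Theorem corollary4p5 (Y : space) (X : Iso Y -> space)
  (HY : tychonoff Y) (HX : forall i, tychonoff (X i))
  (Hne : forall i, inhabited (pt (X i))) :
  (compact_space (zoom Y X) <-> compact_space Y /\ (forall i, compact_space (X i))) /\
  (sigma_compact (zoom Y X) <-> sigma_compact Y /\ (forall i, sigma_compact (X i))) /\
  (K_analytic (zoom Y X) <-> K_analytic Y /\ (forall i, K_analytic (X i))).
Proof.
  split; [|split]; split.
  - apply zoom_closed_hereditary; auto. apply compact_closed_hereditary.
  - intros [HcY HcX]; apply zoom_compact; auto.
  - apply zoom_closed_hereditary; auto. apply sigma_compact_closed_hereditary.
  - intros [HsY HsX]; apply zoom_sigma_compact; auto.
  - apply zoom_closed_hereditary; auto. apply K_analytic_closed_hereditary.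
  - intros [HkY HkX]; apply zoom_K_analytic; auto.
Qed.
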